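(* Let $X=(X_1,\ldots,X_n)$ be i.i.d. real random variables whose common distribution has a density $f$ with respect to Lebesgue measure and a unique median $m$, with constants $r,L>0$ such that $f(u)\ge L$ for all $u\in[m-r,m+r]$. Assume $|m|\le R$ for some $R>0$ and let $T>R+r$. Let $\alpha_3\in[2e^{-nL^2r^2/2},1]$. Then with probability at least $1-\alpha_3$, $$|\hat m_T(X)-m|\le\sqrt{\frac{2\log(2/\alpha_3)}{nL^2}}.$$
   Context: For $x\in\mathbb R^n$, $x_{(1)}\le\cdots\le x_{(n)}$ denote its ordered coordinates, $\ell=\lfloor n/2\rfloor$, and $\hat m(x)=x_{(\ell)}$. For $T>0$, $f_T(u)=u$ if $|u|\le T$ and $f_T(u)=\mathrm{sign}(u)T$ otherwise; $\hat m_T(x)=\hat m(y)$ where $y_i=f_T(x_i)$, $i=1,\ldots,n$. *)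

From HB Require Import structures.
From mathcomp Require Import all_boot all_order all_algebra.
From mathcomp Require Import all_classical all_reals all_analysis.
Set Implicit Arguments. Unset Strict Implicit. Unset Printing Implicit Defensive.
Import Order.TTheory GRing.Theory Num.Theory.
Import numFieldNormedType.Exports.
Local Open Scope classical_set_scope.
Local Open Scope ring_scope.

Section Defs.
Variable R : realType.

(* x_(k) : the k-th smallest coordinate (1-indexed); for k = 0 the
   convention x_(0) := x_(1) is used (never relevant). *)
Definition order_stat (n k : nat) (x : 'I_n -> R) : R :=
  nth 0 (sort <=%R [seq x i | i : 'I_n]) k.-1.

Definition med_hat (n : nat) (x : 'I_n -> R) : R := order_stat (n./2) x.

Definition clip (T u : R) : R := if `|u| <= T then u else Num.sg u * T.

Definition med_hat_T (T : R) (n : nat) (x : 'I_n -> R) : R :=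
  med_hat (fun i => clip T (x i)).

Definition is_median_density (f : R -> R) (m : R) : Prop :=
  let lo := [set x : R | x <= m] in let hi := [set x : R | m <= x] in
  ((2^-1)%:E <= \int[@lebesgue_measure R]_(x in lo) (f x)%:E)%E /\
  ((2^-1)%:E <= \int[@lebesgue_measure R]_(x in hi) (f x)%:E)%E.

End Defs.

Definition mutually_independent {d} {Omega : measurableType d} {R : realType}
  (P : probability Omega R) (n : nat) (X : 'I_n -> {RV P >-> R}) : Prop :=
  forall B : 'I_n -> set R, (forall i, measurable (B i)) ->
    P [set w | forall i, B i (X i w)] = (\prod_(i < n) P (X i @^-1` B i))%E.

Definition has_density {d} {Omega : measurableType d} {R : realType}
  (P : probability Omega R) (Y : {RV P >-> R}) (f : R -> R) : Prop :=
  forall A : set R, measurable A ->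
    P (Y @^-1` A) = (\int[@lebesgue_measure R]_(x in A) (f x)%:E)%E.

From HB Require Import structures.
From mathcomp Require Import all_boot all_order all_algebra.
From mathcomp Require Import all_classical all_reals all_analysis.
From mathcomp Require Import ring lra zify.
Set Implicit Arguments. Unset Strict Implicit. Unset Printing Implicit Defensive.
Import Order.TTheory GRing.Theory Num.Theory.
Local Open Scope classical_set_scope.
Local Open Scope ring_scope.

(* Let l = floor(n/2) and let t be the radius. As m - t and m + t lie in
   (-T, T), clipping at level T does not change how the X_i compare with them,
   so the estimate exceeds m + t only if at least n - l + 1 of the X_i exceed
   m + t, and it falls below m - t only if at least l of them fall below m - t.
   The median property and f >= L on [m - r, m + r] give
   P(X_i > m + t), P(X_i < m - t) <= 1/2 - L t.  A Chernoff bound with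
   exponential moment e^(L t), using e^x <= 1 + x + x^2 on [0, 1/2], bounds
   each of the two binomial tails by exp(-n (L t)^2 / 2) = alpha/2; the slack
   n (L t)^2 >= 1/2 that absorbs the rounding in l holds because alpha <= 1. *)

Lemma count_image_card (T : finType) (U : eqType) (x : T -> U) (p : pred U) :
  count p [seq x i | i : T] = #|[pred i | p (x i)]|.
Proof. by rewrite count_map -sum1_count big_enum_cond -sum1_card. Qed.

Section OrderStatistics.
Variable R : realType.
Implicit Types (s : seq R) (c T u : R).

Lemma sorted_nth_leE s i c : sorted <=%R s -> (i < size s)%N ->
  (nth 0 s i <= c) = (i < count (<= c) s)%N.
Proof.
move=> ss ltis; apply/idP/idP => [|/(nth_count_le _ ss)//].
apply: contraTT; rewrite -!leqNgt -ltNge => le_ci.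
by apply: nth_count_gt; rewrite // le_ci.
Qed.

Lemma sorted_nth_ltE s i c : sorted <=%R s -> (i < size s)%N ->
  (nth 0 s i < c) = (i < count (< c) s)%N.
Proof.
move=> ss ltis; apply/idP/idP => [|/(nth_count_lt _ ss)//].
apply: contraTT; rewrite -!leqNgt -leNgt => le_ci.
by apply: nth_count_ge; rewrite // le_ci.
Qed.

Lemma order_stat_count n k (x : 'I_n -> R) (p : pred R) :
  (0 < k <= n)%N ->
  (forall s, sorted <=%R s -> (k.-1 < size s)%N ->
     p (nth 0 s k.-1) = (k.-1 < count p s)%N) ->
  p (order_stat k x) = (k <= #|[pred i | p (x i)]|)%N.
Proof.
case: k => // k /= le_kn nthE; rewrite /order_stat nthE.
- by rewrite count_sort count_image_card.
- by apply: sort_sorted; exact: le_total.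
- by rewrite size_sort size_map -cardE card_ord.
Qed.

Lemma order_stat_le n k (x : 'I_n -> R) c : (0 < k <= n)%N ->
  (order_stat k x <= c) = (k <= #|[pred i | (x i <= c)%R]|)%N.
Proof.
by move=> k_in; apply: (@order_stat_count n k x (<= c)%R) => // s; exact: sorted_nth_leE.
Qed.

Lemma order_stat_lt n k (x : 'I_n -> R) c : (0 < k <= n)%N ->
  (order_stat k x < c) = (k <= #|[pred i | (x i < c)%R]|)%N.
Proof.
by move=> k_in; apply: (@order_stat_count n k x (< c)%R) => // s; exact: sorted_nth_ltE.
Qed.

Lemma clip_le T c u : - T <= c < T -> (clip T u <= c) = (u <= c).
Proof.
case/andP=> Tc cT; rewrite /clip; case: ifPn => //; rewrite -ltNge.
have [u0|u0|->] := ltgtP u 0; last by rewrite normr0; lra.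
- by rewrite ltr0_sg // ltr0_norm // mulN1r Tc => Tu; apply/esym/ltW; lra.
- by rewrite gtr0_sg // gtr0_norm // mul1r => Tu; apply/idP/idP; lra.
Qed.

Lemma clip_lt T c u : - T < c <= T -> (clip T u < c) = (u < c).
Proof.
case/andP=> Tc cT; rewrite /clip; case: ifPn => //; rewrite -ltNge.
have [u0|u0|->] := ltgtP u 0; last by rewrite normr0; lra.
- by rewrite ltr0_sg // ltr0_norm // mulN1r Tc => Tu; apply/esym; lra.
- by rewrite gtr0_sg // gtr0_norm // mul1r => Tu; apply/idP/idP; lra.
Qed.

Lemma med_hat_T_le T n (x : 'I_n -> R) c : (0 < n./2)%N -> - T <= c < T ->
  (med_hat_T T x <= c) = (n./2 <= #|[pred i | (x i <= c)%R]|)%N.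
Proof.
move=> l_gt0 c_in; rewrite /med_hat_T /med_hat order_stat_le.
  by congr (_ <= _)%N; apply: eq_card => i; rewrite !inE clip_le.
by rewrite l_gt0 -divn2 leq_div.
Qed.

Lemma med_hat_T_lt T n (x : 'I_n -> R) c : (0 < n./2)%N -> - T < c <= T ->
  (med_hat_T T x < c) = (n./2 <= #|[pred i | (x i < c)%R]|)%N.
Proof.
move=> l_gt0 c_in; rewrite /med_hat_T /med_hat order_stat_lt.
  by congr (_ <= _)%N; apply: eq_card => i; rewrite !inE clip_lt.
by rewrite l_gt0 -divn2 leq_div.
Qed.

Lemma med_hat_T_leNcard_gt T n (x : 'I_n -> R) c :
  (0 < n./2)%N -> - T <= c < T ->
  (med_hat_T T x <= c) = ~~ ((n - n./2).+1 <= #|[pred i | (c < x i)%R]|)%N.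
Proof.
move=> l_gt0 c_in; rewrite med_hat_T_le //.
have : (#|[pred i | (x i <= c)%R]| + #|[pred i | (c < x i)%R]|)%N = n.
  rewrite -[RHS](card_ord n) -(cardC [pred i | (x i <= c)%R]); congr addn.
  by apply: eq_card => i; rewrite !inE ltNge.
have : (n./2 <= n)%N by rewrite -divn2 leq_div.
by rewrite -leqNgt => ? ?; apply/idP/idP; lia.
Qed.

Lemma med_hat_T_dist_le T n (x : 'I_n -> R) m t :
  (0 < n./2)%N -> 0 <= t -> - T < m - t -> m + t < T ->
  (`|med_hat_T T x - m| <= t) =
  ~~ ((n - n./2).+1 <= #|[pred i | (m + t < x i)%R]|)%N &&
  ~~ (n./2 <= #|[pred i | (x i < m - t)%R]|)%N.
Proof.
move=> l_gt0 t0 lo hi; rewrite ler_distl andbC (leNgt (m - t)).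
by rewrite med_hat_T_leNcard_gt ?med_hat_T_lt //; apply/andP; split; lra.
Qed.

End OrderStatistics.

Section Chernoff.
Variable R : realType.

Lemma expR_le_1DxDsqr (x : R) : 0 <= x <= 2^-1 -> expR x <= 1 + x + x ^+ 2.
Proof.
(* expR (x/4) <= (1 - x/4)^-1, and the fourth power of the right-hand side
   is below 1 + x + x^2 on [0, 1/2]. *)
case/andP=> x0 x1; set y := x / 4.
have -> : x = 4%:R * y by rewrite /y; field.
have y0 : 0 <= y by rewrite /y; lra.
have y1 : y <= 8^-1 by rewrite /y; lra.
have ey : expR y <= (1 - y)^-1.
  rewrite -[(1 - y)^-1]mul1r ler_pdivlMr; last lra.
  by rewrite -[leRHS](expRxMexpNx_1 y) ler_pM2l ?expR_gt0 // expR_ge1Dx.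
rewrite expRM_natl; apply: (le_trans (lerXn2r 4 _ _ ey)).
- by rewrite nnegrE expR_ge0.
- by rewrite nnegrE invr_ge0; lra.
rewrite exprVn -[_ ^- 4]mul1r ler_pdivrMr; last by apply: exprn_gt0; lra.
have c2_ge0 : 0 <= y ^+ 2 * (6%:R - 44%:R * y) by apply: mulr_ge0; [exact: sqr_ge0 | lra].
have c4_ge0 : 0 <= y ^+ 4 * (81%:R - 60%:R * y) by apply: mulr_ge0; [apply: exprn_ge0 | lra].
have c6_ge0 : 0 <= y ^+ 6 by apply: exprn_ge0.
have -> : (1 + 4%:R * y + (4%:R * y) ^+ 2) * (1 - y) ^+ 4 =
  1 + y ^+ 2 * (6%:R - 44%:R * y) + y ^+ 4 * (81%:R - 60%:R * y) + 16%:R * y ^+ 6.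
  by ring.
lra.
Qed.

Variable n : nat.
Implicit Types (q : 'I_n -> R) (g : {ffun 'I_n -> bool}).

Definition bernoulli_pattern_weight q g : R :=
  \prod_i (if g i then q i else 1 - q i).

Lemma sum_card_ge_weight_le q (a : nat) (y : R) :
  (forall i, 0 <= q i <= 1) -> 1 <= y ->
  \sum_(g : {ffun 'I_n -> bool} | (a <= #|[pred i | g i]|)%N) bernoulli_pattern_weight q g
    <= \prod_i (q i * y + (1 - q i)) / y ^+ a.
Proof.
move=> q01 y1; have y0 : 0 < y by lra.
have w0 g : 0 <= bernoulli_pattern_weight q g.
  by apply: prodr_ge0 => i _; have := q01 i; case: (g i); lra.
have markov g : (a <= #|[pred i | g i]|)%N -> bernoulli_pattern_weight q g <=
    bernoulli_pattern_weight q g * y ^+ #|[pred i | g i]| / y ^+ a.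
  move=> le_a; rewrite -mulrA ler_peMr // ler_pdivlMr ?exprn_gt0 // mul1r.
  exact: ler_weXn2l.
have -> : \prod_i (q i * y + (1 - q i)) =
    \sum_(g : {ffun 'I_n -> bool}) bernoulli_pattern_weight q g * y ^+ #|[pred i | g i]|.
  under eq_bigr => i _ do
    rewrite -[_ + _](big_bool _ (fun b => if b then q i * y else 1 - q i)).
  rewrite bigA_distr_bigA; apply: eq_bigr => g _.
  rewrite /bernoulli_pattern_weight -prodr_const [X in _ * X]big_mkcond -big_split /=.
  by apply: eq_bigr => i _; rewrite inE; case: (g i); rewrite ?mulr1.
rewrite mulr_suml [leRHS](bigID (fun g => (a <= #|[pred i | g i]|)%N)) /= -[leLHS]addr0.
apply: lerD; first exact: ler_sum => g /markov.
apply: sumr_ge0 => g _; apply: mulr_ge0; last by rewrite invr_ge0 exprn_ge0 // ltW.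
by rewrite mulr_ge0 // exprn_ge0 // ltW.
Qed.

Lemma chernoff_exponent_le (a : nat) (delta : R) : 0 <= delta <= 2^-1 ->
  (n <= a.*2.+1)%N -> 2^-1 <= n%:R * delta ^+ 2 ->
  n%:R * ((2^-1 - delta) * (expR delta - 1)) - a%:R * delta <= - (n%:R * delta ^+ 2) / 2.
Proof.
move=> /andP[delta0 delta1] le_n_2a nd2.
have n_le : n%:R <= 2 * a%:R + 1 :> R.
  by move: le_n_2a; rewrite -(ler_nat R) -addn1 -muln2 natrD natrM; lra.
have exp_le : (2^-1 - delta) * (expR delta - 1) <= (2^-1 - delta) * (delta + delta ^+ 2).
  by apply: ler_wpM2l; have := @expR_le_1DxDsqr delta; rewrite delta0 delta1 /=; lra.
have lhs_le := ler_wpM2l (ler0n R n) exp_le.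
have a_ge := ler_wpM2r delta0 n_le.
have cube_ge := ler_wpM2l delta0 nd2.
have lhsE : n%:R * ((2^-1 - delta) * (delta + delta ^+ 2)) =
  n%:R * delta / 2 - n%:R * delta ^+ 2 / 2 - delta * (n%:R * delta ^+ 2) by field.
lra.
Qed.

Lemma sum_card_ge_weight_le_expR q (a : nat) (delta : R) :
  (forall i, 0 <= q i <= 2^-1 - delta) -> 0 <= delta <= 2^-1 ->
  (n <= a.*2.+1)%N -> 2^-1 <= n%:R * delta ^+ 2 ->
  \sum_(g : {ffun 'I_n -> bool} | (a <= #|[pred i | g i]|)%N) bernoulli_pattern_weight q g
    <= expR (- (n%:R * delta ^+ 2) / 2).
Proof.
move=> q_in delta_in le_n_2a nd2; have [delta0 _] := andP delta_in.
have y1 : 1 <= expR delta by rewrite -expR0 ler_expR.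
apply: le_trans (sum_card_ge_weight_le a _ y1) _ => [i|].
  by have := q_in i; lra.
have factor_le i :
    q i * expR delta + (1 - q i) <= expR ((2^-1 - delta) * (expR delta - 1)).
  apply: le_trans (expR_ge1Dx _); have /andP[q0 q_le] := q_in i.
  have : q i * (expR delta - 1) <= (2^-1 - delta) * (expR delta - 1).
    by apply: ler_wpM2r; lra.
  lra.
have prod_le : \prod_i (q i * expR delta + (1 - q i)) <=
    expR ((2^-1 - delta) * (expR delta - 1)) ^+ n.
  rewrite -[X in _ ^+ X]card_ord -prodr_const; apply: ler_prod => i _.
  have /andP[q0 q_le] := q_in i; rewrite factor_le andbT.
  by rewrite addr_ge0 ?mulr_ge0 ?expR_ge0 //; lra.
apply: le_trans (ler_wpM2r _ prod_le) _; first by rewrite invr_ge0 exprn_ge0 // expR_ge0.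
rewrite -expRM_natl -expRM_natl -expRN -expRD ler_expR.
exact: chernoff_exponent_le.
Qed.

End Chernoff.

Section CountEvents.
Context d (Omega : measurableType d) (R : realType) (P : probability Omega R).
Variables (n : nat) (X : 'I_n -> {RV P >-> R}) (b : pred R).
Let B := [set x | b x].
Hypothesis mB : measurable B.

Definition count_ge_event (a : nat) : set Omega :=
  [set w | (a <= #|[pred i | b (X i w)]|)%N].

Definition pattern_event (g : {ffun 'I_n -> bool}) : set Omega :=
  [set w | forall i, (if g i then B else ~` B) (X i w)].

Lemma pattern_eventP g w : pattern_event g w <-> forall i, b (X i w) = g i.
Proof.
split=> gw i; have := gw i; case: (g i) => /=.
- by [].
- by move/negP/negbTE.
- by [].
- by move/negbT/negP.
Qed.

Lemma count_ge_eventE a : count_ge_event a =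
  \bigcup_(g in [set g : {ffun 'I_n -> bool} | (a <= #|[pred i | g i]|)%N]) pattern_event g.
Proof.
apply/seteqP; split=> w.
- move=> le_a; exists [ffun i => b (X i w)].
    by rewrite /= (eq_card (B := [pred i | b (X i w)])) // => i; rewrite !inE ffunE.
  by apply/pattern_eventP => i; rewrite ffunE.
- case=> g le_a /pattern_eventP gw; rewrite /count_ge_event /=.
  by rewrite (eq_card (B := [pred i | g i])) // => i; rewrite !inE gw.
Qed.

Lemma measurable_pattern_event g : measurable (pattern_event g).
Proof.
have -> : pattern_event g =
    \bigcap_(i in [set: 'I_n]) X i @^-1` (if g i then B else ~` B).
  by apply/seteqP; split=> [w gw i _|w gw i]; exact: gw.
apply: fin_bigcap_measurable; first exact: finite_finset.
move=> i _; apply: measurable_funPTI.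
by case: (g i) => //; apply: measurableC.
Qed.

Lemma measurable_count_ge_event a : measurable (count_ge_event a).
Proof.
rewrite count_ge_eventE; apply: fin_bigcup_measurable; first exact: finite_finset.
by move=> g _; exact: measurable_pattern_event.
Qed.

Let q i := fine (P (X i @^-1` B)).

Let Pq i : P (X i @^-1` B) = (q i)%:E.
Proof. by rewrite fineK // fin_num_measure //; apply: measurable_funPTI. Qed.

Lemma prob_pattern_event g : mutually_independent X ->
  P (pattern_event g) = (bernoulli_pattern_weight q g)%:E.
Proof.
move=> indep; rewrite /pattern_event (indep (fun i => if g i then B else ~` B)); last first.
  by move=> i; case: (g i) => //; apply: measurableC.
rewrite /bernoulli_pattern_weight -prodEFin; apply: eq_bigr => i _.
have mXB : measurable (X i @^-1` B) by apply: measurable_funPTI.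
case: (g i); first exact: Pq.
by rewrite preimage_setC probability_setC // Pq.
Qed.

Lemma prob_count_ge_event a : mutually_independent X ->
  P (count_ge_event a) =
  (\sum_(g : {ffun 'I_n -> bool} | (a <= #|[pred i | g i]|)%N) bernoulli_pattern_weight q g)%:E.
Proof.
move=> indep; rewrite count_ge_eventE measure_fin_bigcup //; last 3 first.
- (* restated so that the finType instance of {ffun 'I_n -> bool} is found *)
  have fin : finite_set [set g : {ffun 'I_n -> bool} | (a <= #|[pred i | g i]|)%N].
    exact: finite_finset.
  exact: fin.
- move=> g h _ _ [w [/pattern_eventP gw /pattern_eventP hw]].
  by apply/ffunP => i; rewrite -gw -hw.
- by move=> g _; exact: measurable_pattern_event.
rewrite -sumEFin [RHS]bigfs ?index_enum_uniq //; last by move=> g _; rewrite mem_index_enum.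
transitivity (\sum_(g \in [set g : {ffun 'I_n -> bool} | (a <= #|[pred i | g i]|)%N])
               (bernoulli_pattern_weight q g)%:E).
  by apply: eq_fsbigr => g _; exact: prob_pattern_event.
by apply: eq_fsbigl; apply/seteqP; split => g; rewrite /= unfold_in.
Qed.

Lemma prob_count_ge_event_le a (delta : R) : mutually_independent X ->
  (forall i, P (X i @^-1` B) <= (2^-1 - delta)%:E)%E -> 0 <= delta <= 2^-1 ->
  (n <= a.*2.+1)%N -> 2^-1 <= n%:R * delta ^+ 2 ->
  (P (count_ge_event a) <= (expR (- (n%:R * delta ^+ 2) / 2))%:E)%E.
Proof.
move=> indep PB delta_in le_n_2a nd2; rewrite prob_count_ge_event // lee_fin.
apply: sum_card_ge_weight_le_expR => // i.
by rewrite -!lee_fin -Pq measure_ge0 PB.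
Qed.

End CountEvents.

Section Density.
Variable R : realType.
Local Notation lambda := (@lebesgue_measure R).

Lemma measure_itv_bndbnd_setU (mu : {measure set R -> \bar R}) (a x y : itv_bound R) :
  (a <= x)%O -> (x <= y)%O ->
  mu [set` Interval a y] = (mu [set` Interval a x] + mu [set` Interval x y])%E.
Proof.
move=> ax xy; rewrite (itv_bndbnd_setU ax xy) measureU //; try exact: measurable_itv.
apply/seteqP; split=> // z []; rewrite /= !itv_boundlr => /andP[_ zx] /andP[xz _].
by have := le_trans zx xz; rewrite bnd_simp ltxx.
Qed.

Lemma lebesgue_measure_itvoc (a t : R) : 0 <= t -> lambda `]a, a + t] = t%:E.
Proof.
rewrite le_eqVlt => /predU1P[<-|t0]; first by rewrite addr0 set_itvoc0 measure0.
by rewrite lebesgue_measure_itv /= lte_fin ltrDl t0 -EFinB addrAC subrr add0r.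
Qed.

Lemma lebesgue_measure_itvco (a t : R) : 0 <= t -> lambda `[a - t, a[ = t%:E.
Proof.
rewrite le_eqVlt => /predU1P[<-|t0]; first by rewrite subr0 set_itvco0 measure0.
by rewrite lebesgue_measure_itv /= lte_fin gtrBl t0 -EFinB opprB addrC subrK.
Qed.

Lemma cst_mul_lebesgue_le_integral (f : R -> R) (D : set R) (L : R) :
  measurable D -> measurable_fun D f -> 0 <= L -> (forall u, D u -> L <= f u) ->
  (L%:E * lambda D <= \int[lambda]_(x in D) (f x)%:E)%E.
Proof.
move=> mD mf L0 Lf; rewrite -(integral_cst lambda mD L%:E).
apply: ge0_le_integral => //.
by apply/measurable_realfun.measurable_EFinP.
Qed.

Variables (mu : probability R R) (f : R -> R) (m L t : R).
Hypotheses (mu_dens : forall A, measurable A -> (mu A = \int[lambda]_(x in A) (f x)%:E)%E)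
  (mf : measurable_fun setT f) (med : is_median_density f m) (L0 : 0 <= L) (t0 : 0 <= t).

Lemma prob_gt_median_le : (forall u, m < u <= m + t -> L <= f u) ->
  (mu [set x | (m + t < x)%R] <= (2^-1 - L * t)%:E)%E.
Proof.
move=> Lf; have [med_le _] := med.
have half : ((2^-1)%:E <= mu `]-oo, m]%classic)%E by rewrite mu_dens // set_itvNyc.
have mass : ((L * t)%:E <= mu `]m, (m + t)%R]%classic)%E.
  rewrite mu_dens // EFinM -(lebesgue_measure_itvoc m t0).
  by apply: cst_mul_lebesgue_le_integral => //; exact: measurable_funTS.
rewrite -set_itvoy -setCitvl probability_setC //.
rewrite (@measure_itv_bndbnd_setU _ _ (BRight m)) ?bnd_simp ?lerDl //.
apply: le_trans (leeB (lexx 1%E) (leeD half mass)) _.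
by rewrite -EFinD lee_fin; lra.
Qed.

Lemma prob_lt_median_le : (forall u, m - t <= u < m -> L <= f u) ->
  (mu [set x | (x < m - t)%R] <= (2^-1 - L * t)%:E)%E.
Proof.
move=> Lf; have [_ med_ge] := med.
have half : ((2^-1)%:E <= mu `[m, +oo[%classic)%E by rewrite mu_dens // set_itvcy.
have mass : ((L * t)%:E <= mu `[(m - t)%R, m[%classic)%E.
  rewrite mu_dens // EFinM -(lebesgue_measure_itvco m t0).
  by apply: cst_mul_lebesgue_le_integral => //; exact: measurable_funTS.
rewrite -set_itvNyo -setCitvr probability_setC //.
rewrite (@measure_itv_bndbnd_setU _ _ (BLeft m)) ?bnd_simp ?gerBl //.
apply: le_trans (leeB (lexx 1%E) (leeD mass half)) _.
by rewrite -EFinD lee_fin; lra.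
Qed.

End Density.

Section MedianConcentration.
Context d (Omega : measurableType d) (R : realType) (P : probability Omega R).
Variables (n : nat) (X : 'I_n -> {RV P >-> R}).

Lemma med_hat_T_near_eventE (T m t : R) :
  (0 < n./2)%N -> 0 <= t -> - T < m - t -> m + t < T ->
  [set w | `|med_hat_T T (fun i => X i w) - m| <= t] =
  ~` (count_ge_event X (fun x => m + t < x) (n - n./2).+1 `|`
      count_ge_event X (fun x => x < m - t) n./2).
Proof.
move=> l_gt0 t0 lo hi; apply/seteqP; split=> w.
  by rewrite /= med_hat_T_dist_le // => /andP[/negP nA1 /negP nA2] [].
rewrite /= med_hat_T_dist_le // => nA.
by apply/andP; split; apply/negP => ?; apply: nA; [left|right].
Qed.

Lemma prob_med_hat_T_near (T m t delta : R) :
  mutually_independent X -> 0 <= t -> - T < m - t -> m + t < T -> 0 <= delta ->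
  2^-1 <= n%:R * delta ^+ 2 ->
  (forall i, P (X i @^-1` [set x | (m + t < x)%R]) <= (2^-1 - delta)%:E)%E ->
  (forall i, P (X i @^-1` [set x | (x < m - t)%R]) <= (2^-1 - delta)%:E)%E ->
  ((1 - 2 * expR (- (n%:R * delta ^+ 2) / 2))%:E <=
     P [set w | (`|med_hat_T T (fun i => X i w) - m| <= t)%R])%E.
Proof.
move=> indep t0 lo hi delta0 nd2 Pgt Plt.
have n_gt0 : (0 < n)%N by case: (posnP n) nd2 => // ->; rewrite mul0r; lra.
have delta_le : delta <= 2^-1.
  by rewrite -subr_ge0 -lee_fin (le_trans _ (Pgt (Ordinal n_gt0))).
have l_gt0 : (0 < n./2)%N.
  have : n%:R * delta ^+ 2 <= n%:R * 4^-1 by apply: ler_wpM2l; nra.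
  by rewrite -divn2 divn_gt0 // -(ler_nat R); lra.
rewrite med_hat_T_near_eventE //.
set A1 := count_ge_event _ _ _; set A2 := count_ge_event _ _ _.
have mgt : measurable [set x : R | m + t < x] by rewrite -set_itvoy; exact: measurable_itv.
have mlt : measurable [set x : R | x < m - t] by rewrite -set_itvNyo; exact: measurable_itv.
have mA1 : measurable A1 by exact: measurable_count_ge_event.
have mA2 : measurable A2 by exact: measurable_count_ge_event.
rewrite probability_setC; last exact: measurableU.
set e := expR (- (n%:R * delta ^+ 2) / 2).
have halfE : n = (odd n + n./2.*2)%N by rewrite odd_double_half.
have PA1 : (P A1 <= e%:E)%E.
  apply: prob_count_ge_event_le; rewrite ?delta0 ?delta_le //.
  by rewrite {1}halfE; case: (odd n); lia.
have PA2 : (P A2 <= e%:E)%E.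
  apply: prob_count_ge_event_le; rewrite ?delta0 ?delta_le //.
  by rewrite {1}halfE; case: (odd n); lia.
have PU : (P (A1 `|` A2) <= e%:E + e%:E)%E.
  exact: le_trans (measureU2 P mA1 mA2) (leeD PA1 PA2).
apply: le_trans _ (leeB (lexx 1%E) PU).
by rewrite -EFinD lee_fin; lra.
Qed.

End MedianConcentration.

Lemma deviation_radius (R : realType) (n : nat) (L r alpha : R) : 0 < L -> 0 < r ->
  2 * expR (- (n%:R * L ^+ 2 * r ^+ 2) / 2) <= alpha -> alpha <= 1 ->
  let t := Num.sqrt (2 * ln (2 / alpha) / (n%:R * L ^+ 2)) in
  [/\ t <= r, 2^-1 <= n%:R * (L * t) ^+ 2 & 2 * expR (- (n%:R * (L * t) ^+ 2) / 2) = alpha].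
Proof.
move=> L0 r0 lo_alpha alpha1; set K := ln (2 / alpha) => t.
have alpha0 : 0 < alpha by apply: lt_le_trans lo_alpha; rewrite mulr_gt0 ?expR_gt0.
have n_gt0 : (0 < n)%N.
  by case: (posnP n) lo_alpha => // ->; rewrite !mul0r oppr0 mul0r expR0; lra.
have nL2 : 0 < n%:R * L ^+ 2 by rewrite mulr_gt0 ?ltr0n ?exprn_gt0.
have ln2_le_K : ln 2 <= K by rewrite ler_ln ?posrE ?divr_gt0 // ler_pdivlMr //; lra.
have ln2 : 4^-1 <= ln (2 : R).
  rewrite -[leLHS]expRK ler_ln ?posrE ?expR_gt0 //.
  by have := @expR_le_1DxDsqr R 4^-1; lra.
have ntE : n%:R * (L * t) ^+ 2 = 2 * K.
  rewrite exprMn sqr_sqrtr; last by rewrite divr_ge0 ?ltW //; lra.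
  by field; rewrite gt_eqF //= pnatr_eq0 -lt0n.
have K_le : K <= n%:R * L ^+ 2 * r ^+ 2 / 2.
  rewrite /K -[leRHS]expRK ler_ln ?posrE ?divr_gt0 ?expR_gt0 //.
  by rewrite ler_pdivrMr // mulrC -ler_pdivrMr ?expR_gt0 // -expRN -mulNr.
split.
- have t0 : 0 <= t := sqrtr_ge0 _.
  have h : n%:R * (L * t) ^+ 2 <= n%:R * (L * r) ^+ 2.
    by rewrite ntE exprMn mulrA; lra.
  have Lt0 : 0 <= L * t by rewrite mulr_ge0 // ltW.
  have Lr0 : 0 <= L * r by rewrite mulr_ge0 // ltW.
  by rewrite ler_pM2l ?ltr0n // ler_sqr ?nnegrE // ler_pM2l in h.
- by rewrite ntE; lra.
- rewrite ntE (_ : - (2 * K) / 2 = - K); last by field.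
  by rewrite expRN lnK ?posrE ?divr_gt0 // invf_div mulrC divfK.
Qed.

Theorem lemma3 (d : measure_display) (Omega : measurableType d) (R : realType)
  (P : probability Omega R) (n : nat) (X : 'I_n -> {RV P >-> R})
  (f : R -> R) (m r L RR T alpha3 : R) :
  mutually_independent X ->
  measurable_fun setT f -> (forall u, 0 <= f u) ->
  (forall i, has_density (X i) f) ->
  is_median_density f m ->
  (forall m', is_median_density f m' -> m' = m) ->
  0 < r -> 0 < L ->
  (forall u, m - r <= u <= m + r -> L <= f u) ->
  0 < RR -> `|m| <= RR -> RR + r < T ->
  2 * expR (- (n%:R * L ^+ 2 * r ^+ 2) / 2) <= alpha3 -> alpha3 <= 1 ->
  let t := Num.sqrt (2 * ln (2 / alpha3) / (n%:R * L ^+ 2)) in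
  let E := [set w | `|med_hat_T T (fun i => X i w) - m| <= t] in
  ((1 - alpha3)%:E <= P E)%E.
Proof.
move=> indep mf _ dens med _ r0 L0 Lr _ mR RT lo_alpha alpha1; cbv zeta.
have [] := deviation_radius L0 r0 lo_alpha alpha1.
set t := Num.sqrt _; set E := [set w | _] => tr nt2 alphaE.
have t0 : 0 <= t := sqrtr_ge0 _.
have m_le := ler_norm m.
have Nm_le : - m <= `|m| by rewrite -normrN ler_norm.
have Pgt i : (P (X i @^-1` [set x | (m + t < x)%R]) <= (2^-1 - L * t)%:E)%E.
  apply: (prob_gt_median_le (mu := distribution P (X i)) (dens i) mf med (ltW L0) t0).
  by move=> u /andP[mu ut]; apply: Lr; apply/andP; split; lra.
have Plt i : (P (X i @^-1` [set x | (x < m - t)%R]) <= (2^-1 - L * t)%:E)%E.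
  apply: (prob_lt_median_le (mu := distribution P (X i)) (dens i) mf med (ltW L0) t0).
  by move=> u /andP[tu um]; apply: Lr; apply/andP; split; lra.
rewrite -{1}alphaE; apply: prob_med_hat_T_near => //; try lra.
by rewrite mulr_ge0 // ltW.
Qed.
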